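(* Let $I_A$ and $I_B$ be two MatP instances with the same underlying graph $G=(W\cup F,E)$ that differ only in the preference order of a single agent $x$, let $e=\{x,y\}\in E$, and let $I_H$ be a hybrid instance of $(I_A,I_B)$ with respect to $e$. Then: (1) there exists a robust popular matching with respect to $I_A$ and $I_B$ containing $e$ if and only if there exists a popular matching for $I_H$ containing $e$; (2) there exists a robust dominant matching with respect to $I_A$ and $I_B$ containing $e$ if and only if there exists a dominant matching for $I_H$ containing $e$.
   Context: An instance $I$ of matchings under preferences (MatP) consists of a bipartite graph $G^I=(W\cup F,E^I)$ with disjoint finite vertex sets $W$ (workers) and $F$ (firms), whose elements are called agents, together with, for each agent $x$, a strict linear order $\succ_x^I$ (preference order) over the set $N_x^I$ of neighbors of $x$ in $G^I$. A matching is a set of pairwise disjoint edges; $M(x)$ denotes the partner of a matched agent $x$. Agent $x$ prefers $M$ over $M'$ if $x$ is matched in $M$ and unmatched in $M'$, or matched in both with $M(x)\succ_x M'(x)$. Define $\mathrm{vote}^I_x(M,M')=1$ if $x$ prefers $M$ over $M'$, $-1$ if $x$ prefers $M'$ over $M$, and $0$ otherwise, and the popularity margin $\phi^I(M,M')=\sum_{x\in W\cup F}\mathrm{vote}^I_x(M,M')$. A matching $M$ of $G^I$ is popular for $I$ if $\phi^I(M,M')\ge 0$ for every matching $M'$ of $G^I$; it is dominant for $I$ if it is popular and $\phi^I(M,M')>0$ for every matching $M'$ of $G^I$ with $|M'|>|M|$. For two instances $I_A,I_B$ on the same agent sets, a matching is robust popular (resp. robust dominant) with respect to $I_A$ and $I_B$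 if it is popular (resp. dominant) for both $I_A$ and $I_B$. Hybrid instance: suppose $I_A,I_B$ have the same graph $G$ and differ only in the preferences of agent $x$, and let $e=\{x,y\}\in E$. Let $P^A=\{z: z\succ_x^{I_A} y\}$ and $P^B=\{z: z\succ_x^{I_B} y\}$. A hybrid instance $I_H$ of $(I_A,I_B)$ with respect to $e$ is the MatP instance on $G$ in which every agent $z\neq x$ has preference order $\succ_z^{I_A}$, and $x$ has any linear order $\succ'$ on $N_x$ such that $z\succ' y$ for all $z\in P^A\cup P^B$ and $y\succ' z$ for all $z\in N_x\setminus(P^A\cup P^B\cup\{y\})$. *)

From mathcomp Require Import all_boot all_order all_algebra.
Import GRing.Theory Num.Theory.
Local Open Scope ring_scope.
Set Implicit Arguments. Unset Strict Implicit. Unset Printing Implicit Defensive.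

(* Agents: a finite type V partitioned into workers (isW) and firms (~~ isW).  An edge {u,v} is represented as the 2-set [set u; v]. *)

Section MatP.
Variable V : finType.

Definition bipartite_graph (isW : pred V) (adj : rel V) : Prop :=
  (forall u v, adj u v -> adj v u) /\ (forall u v, adj u v -> isW u != isW v).

(* preference profile: pref x a b  means  a >_x b *)
Definition pref_profile := V -> rel V.

Definition strict_linear_on (N : pred V) (r : rel V) : Prop :=
  [/\ (forall a, N a -> ~~ r a a),
      (forall a b c, N a -> N b -> N c -> r a b -> r b c -> r a c),
      (forall a b, N a -> N b -> a != b -> r a b || r b a)
    & (forall a b, r a b -> N a /\ N b)].

Definition valid_prefs (adj : rel V) (p : pref_profile) : Prop :=
  forall x, strict_linear_on (adj x) (p x).

Definition is_matching (adj : rel V) (M : {set {set V}}) : Prop :=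
  (forall e, e \in M -> exists u v, [/\ adj u v, u != v & e = [set u; v]]) /\
  (forall e f, e \in M -> f \in M -> e != f -> [disjoint e & f]).

Definition partner (M : {set {set V}}) (x : V) : option V :=
  [pick y | [set x; y] \in M & y != x].

Definition prefers (p : pref_profile) (x : V) (M M' : {set {set V}}) : bool :=
  match partner M x, partner M' x with
  | Some y, None => true
  | Some y, Some y' => p x y y'
  | _, _ => false
  end.

Definition vote (p : pref_profile) (x : V) (M M' : {set {set V}}) : int :=
  if prefers p x M M' then (1 : int) else if prefers p x M' M then (-1 : int) else (0 : int).

Definition phi (p : pref_profile) (M M' : {set {set V}}) : int :=
  foldr (fun x s => (vote p x M M' + s)%R) 0%R (enum V).

Definition popular (adj : rel V) (p : pref_profile) (M : {set {set V}}) : Prop :=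
  is_matching adj M /\
  forall M', is_matching adj M' -> (0 <= phi p M M')%R.

Definition dominant (adj : rel V) (p : pref_profile) (M : {set {set V}}) : Prop :=
  popular adj p M /\
  forall M', is_matching adj M' -> (#|M| < #|M'|)%N -> (0 < phi p M M')%R.

Definition hybrid (adj : rel V) (pA pB pH : pref_profile) (x y : V) : Prop :=
  valid_prefs adj pH /\
  (forall z, z != x -> pH z =2 pA z) /\
  (forall z, adj x z -> (pA x z y || pB x z y) -> pH x z y) /\
  (forall z, adj x z -> z != y -> ~~ (pA x z y || pB x z y) -> pH x y z).

End MatP.

From mathcomp Require Import all_boot all_order all_algebra.
Import GRing.Theory Num.Theory Order.TTheory.

Set Implicit Arguments.
Unset Strict Implicit.
Unset Printing Implicit Defensive.

(** Fix a matching M containing e = {x, y} and any competitor M'.  All agents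
    other than x vote identically in I_A, I_B and I_H.  Since x is matched to y
    in M, its vote only depends on whether its partner y' in M' is ranked above
    y; in I_H this happens exactly when it happens in I_A or in I_B, so x votes
    in I_H as the minimum of its two votes.  Hence
    phi_H(M, M') = min (phi_A(M, M'), phi_B(M, M')), and M is popular
    (dominant) for I_H iff it is so for both I_A and I_B. *)

Local Open Scope ring_scope.

Section Votes.
Variables (V : finType) (adj : rel V).
Implicit Types (p q r : pref_profile V) (M : {set {set V}}).

Lemma strict_linear_asym (N : pred V) (r : rel V) a b :
  strict_linear_on N r -> N a -> N b -> r a b -> ~~ r b a.
Proof.
move=> [irr tr _ _] Na Nb rab; apply/negP => rba.
by have := irr _ Na; rewrite (tr _ _ _ Na Nb Na rab rba).
Qed.

Lemma prefers_eq_pref p q z M M' :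
  p z =2 q z -> prefers p z M M' = prefers q z M M'.
Proof. by move=> pq; rewrite /prefers; case: (partner M z); case: (partner M' z). Qed.

Lemma vote_eq_pref p q z M M' : p z =2 q z -> vote p z M M' = vote q z M M'.
Proof. by move=> pq; rewrite /vote !(prefers_eq_pref _ _ pq). Qed.

Lemma phiE p M M' : phi p M M' = \sum_(z <- enum V) vote p z M M'.
Proof. by rewrite unlock. Qed.

Lemma phi_min_at p q r x M M' :
  (forall z, z != x -> vote p z M M' = vote r z M M') ->
  (forall z, z != x -> vote q z M M' = vote r z M M') ->
  vote r x M M' = Num.min (vote p x M M') (vote q x M M') ->
  phi r M M' = Num.min (phi p M M') (phi q M M').
Proof.
move=> pr qr rx; rewrite !phiE !(bigD1_seq x) ?mem_enum ?enum_uniq //=.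
by rewrite (eq_bigr _ pr) (eq_bigr _ qr) rx addr_minl.
Qed.

Lemma partner_set2 M u v :
  is_matching adj M -> [set u; v] \in M -> u != v -> partner M u = Some v.
Proof.
move=> [_ disj] uvM uv; rewrite /partner; case: pickP => [w /andP [uwM wu]|none].
  have [E|neq] := eqVneq [set u; w] [set u; v].
    have : w \in [set u; v] by rewrite -E set22.
    by rewrite in_set2 (negbTE wu) => /eqP ->.
  by have := disjointFr (disj _ _ uwM uvM neq) (set21 u w); rewrite set21.
by have := none v; rewrite /= uvM eq_sym uv.
Qed.

Lemma adj_partner M u v : (forall a b, adj a b -> adj b a) ->
  is_matching adj M -> partner M u = Some v -> adj u v.
Proof.
move=> adj_sym [edges _]; rewrite /partner; case: pickP => // w /andP [uwM wu] [<-].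
have [a [b [ab _ E]]] := edges _ uwM.
have : u \in [set a; b] by rewrite -E set21.
have : w \in [set a; b] by rewrite -E set22.
rewrite !in_set2 => /orP [] /eqP wE /orP [] /eqP uE; subst w u;
  rewrite ?eqxx // in wu *.
exact: adj_sym.
Qed.

Lemma vote_matched r M M' u v :
  strict_linear_on (adj u) (r u) -> partner M u = Some v -> adj u v ->
  (forall w, partner M' u = Some w -> adj u w) ->
  vote r u M M' =
    if partner M' u is Some w then (if w == v then 0 else if r u w v then -1 else 1)
    else 1.
Proof.
move=> lin uM uv M'adj; have [irr _ tot _] := lin.
rewrite /vote /prefers uM; case uM': (partner M' u) => [w|] //.
have uw := M'adj _ uM'; have [->|wv] := eqVneq w v; first by rewrite (negbTE (irr _ uv)).
have vw : v != w by rewrite eq_sym.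
have [rvw|rwv] := orP (tot _ _ uv uw vw).
  by rewrite rvw (negbTE (strict_linear_asym lin uv uw rvw)).
by rewrite rwv (negbTE (strict_linear_asym lin uw uv rwv)).
Qed.

Lemma vote_matched_min p q r M M' u v :
  strict_linear_on (adj u) (p u) -> strict_linear_on (adj u) (q u) ->
  strict_linear_on (adj u) (r u) ->
  partner M u = Some v -> adj u v -> (forall w, partner M' u = Some w -> adj u w) ->
  (forall w, adj u w -> w != v -> r u w v = p u w v || q u w v) ->
  vote r u M M' = Num.min (vote p u M M') (vote q u M M').
Proof.
move=> plin qlin rlin uM uv M'adj r_or.
rewrite !(vote_matched _ uM uv M'adj) //.
case uM': (partner M' u) => [w|]; last by rewrite minxx.
have [_|wv] := eqVneq w v; first by rewrite minxx.
by rewrite (r_or _ (M'adj _ uM') wv); case: (p u w v); case: (q u w v).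
Qed.

End Votes.

Section Hybrid.
Variables (V : finType) (adj : rel V) (pA pB pH : pref_profile V) (x y : V).
Hypotheses (adj_sym : forall u v, adj u v -> adj v u) (xy : adj x y) (x_neq_y : x != y).
Hypotheses (validA : valid_prefs adj pA) (validB : valid_prefs adj pB).
Hypotheses (pB_pA : forall z, z != x -> pB z =2 pA z) (hyb : hybrid adj pA pB pH x y).
Implicit Types M : {set {set V}}.

Lemma hybrid_pref_above w : adj x w -> w != y -> pH x w y = pA x w y || pB x w y.
Proof.
have [validH [_ [above below]]] := hyb; move=> xw wy.
case AB: (pA x w y || pB x w y); first exact: above.
exact/negbTE/(strict_linear_asym (validH x) xy xw (below _ xw wy (negbT AB))).
Qed.

Lemma phi_hybrid M M' :
  is_matching adj M -> is_matching adj M' -> [set x; y] \in M ->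
  phi pH M M' = Num.min (phi pA M M') (phi pB M M').
Proof.
move=> Mm M'm xyM; have [validH [pH_pA _]] := hyb.
apply: (phi_min_at (x := x)) => [z zx | z zx |].
- by rewrite (vote_eq_pref M M' (pH_pA z zx)).
- by rewrite (vote_eq_pref M M' (pH_pA z zx)) (vote_eq_pref M M' (pB_pA zx)).
apply: (vote_matched_min (validA x) (validB x) (validH x) _ xy) => //.
- exact: (partner_set2 Mm).
- by move=> w; apply: (adj_partner adj_sym M'm).
- exact: hybrid_pref_above.
Qed.

Lemma popular_hybrid M : [set x; y] \in M ->
  popular adj pH M <-> popular adj pA M /\ popular adj pB M.
Proof.
move=> xyM; split=> [[Mm popH] | [[Mm popA] [_ popB]]].
  by split; split=> // M' M'm; have := popH _ M'm;
    rewrite (phi_hybrid Mm M'm xyM) le_min => /andP [].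
by split=> // M' M'm; rewrite (phi_hybrid Mm M'm xyM) le_min popA ?popB.
Qed.

Lemma dominant_hybrid M : [set x; y] \in M ->
  dominant adj pH M <-> dominant adj pA M /\ dominant adj pB M.
Proof.
move=> xyM; split=> [[popH domH] | [[popA domA] [popB domB]]].
  have [popA popB] := (popular_hybrid xyM).1 popH.
  by split; split=> // M' M'm lt; have := domH _ M'm lt;
    rewrite (phi_hybrid popH.1 M'm xyM) lt_min => /andP [].
split=> [|M' M'm lt]; first exact/(popular_hybrid xyM).2.
by rewrite (phi_hybrid popA.1 M'm xyM) lt_min domA ?domB.
Qed.

End Hybrid.

Theorem corollary1 (V : finType) (isW : pred V) (adj : rel V)
  (pA pB pH : pref_profile V) (x y : V) :
  bipartite_graph isW adj ->
  valid_prefs adj pA -> valid_prefs adj pB ->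
  (forall z, z != x -> pB z =2 pA z) ->
  adj x y ->
  hybrid adj pA pB pH x y ->
  ((exists M, [/\ popular adj pA M, popular adj pB M & [set x; y] \in M]) <->
   (exists M, popular adj pH M /\ [set x; y] \in M)) /\
  ((exists M, [/\ dominant adj pA M, dominant adj pB M & [set x; y] \in M]) <->
   (exists M, dominant adj pH M /\ [set x; y] \in M)).
Proof.
move=> [adj_sym bip] validA validB pB_pA xy hyb.
have x_neq_y : x != y by apply: contraTneq (bip _ _ xy) => ->; rewrite eqxx.
have popH := popular_hybrid adj_sym xy x_neq_y validA validB pB_pA hyb.
have domH := dominant_hybrid adj_sym xy x_neq_y validA validB pB_pA hyb.
split; split.
- by move=> [M [popA popB xyM]]; exists M; split; first exact/(popH M xyM).2.
- move=> [M [popHM xyM]]; have [popA popB] := (popH M xyM).1 popHM; by exists M.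
- by move=> [M [domA domB xyM]]; exists M; split; first exact/(domH M xyM).2.
- move=> [M [domHM xyM]]; have [domA domB] := (domH M xyM).1 domHM; by exists M.
Qed.
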